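(* Let $\ell,m,n\in\mathbb{N}$, $\mathbf{p}_1,\dots,\mathbf{p}_m\in\mathrm{Prob}(n)$ and $\mathbf{s}\in\mathrm{Prob}(\ell)$. Then $$H\Big(\bigvee_{x\in[m]}(\mathbf{p}_x\otimes\mathbf{s})\Big)\le\log\ell+H\Big(\bigvee_{x\in[m]}\mathbf{p}_x\Big),$$ where $H$ is the Shannon entropy.
   Context: $H(\mathbf{p})=-\sum_i p_i\log p_i$. For $\mathbf{p},\mathbf{q}\in\mathrm{Prob}(N)$, $\mathbf{p}\succ\mathbf{q}$ means the sum of the $k$ largest entries of $\mathbf{p}$ is at least that of $\mathbf{q}$ for all $k$. For a finite set $\{\mathbf{a}_x\}\subset\mathrm{Prob}(N)$, $\bigvee_x\mathbf{a}_x$ denotes its optimal upper bound: the unique $\mathbf{q}\in\mathrm{Prob}^{\downarrow}(N)$ (non-increasing entries) with $\mathbf{q}\succ\mathbf{a}_x$ for all $x$ such that every $\mathbf{p}\in\mathrm{Prob}(N)$ with $\mathbf{p}\succ\mathbf{a}_x$ for all $x$ satisfies $\mathbf{p}\succ\mathbf{q}$. *)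

From HB Require Import structures.
From mathcomp Require Import all_boot all_order all_algebra.
From mathcomp Require Import reals exp.
Set Implicit Arguments. Unset Strict Implicit. Unset Printing Implicit Defensive.
Import Order.TTheory GRing.Theory Num.Theory.
Local Open Scope ring_scope.

Section Majorization.
Variable R : realType.

Definition Prob (N : nat) (p : 'rV[R]_N) : Prop :=
  (forall i, 0 <= p 0 i) /\ \sum_(i < N) p 0 i = 1.

Definition Prob_dec (N : nat) (p : 'rV[R]_N) : Prop :=
  Prob p /\ (forall i j : 'I_N, (i <= j)%N -> p 0 j <= p 0 i).

Definition sum_largest (N : nat) (p : 'rV[R]_N) (k : nat) : R :=
  \sum_(x <- take k (sort (fun a b : R => b <= a) [seq p 0 i | i : 'I_N])) x.

Definition majorizes (N : nat) (p q : 'rV[R]_N) : Prop :=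
  forall k : nat, sum_largest q k <= sum_largest p k.

Definition is_opt_upper_bound (m N : nat) (a : 'I_m -> 'rV[R]_N)
    (q : 'rV[R]_N) : Prop :=
  [/\ Prob_dec q,
      (forall x, majorizes q (a x)) &
      (forall p : 'rV[R]_N, Prob p -> (forall x, majorizes p (a x)) ->
         majorizes p q)].

(* Shannon entropy (natural log; ln 0 = 0 in mathcomp-analysis, so 0 ln 0 = 0) *)
Definition entropy (N : nat) (p : 'rV[R]_N) : R :=
  - \sum_(i < N) p 0 i * ln (p 0 i).

Definition tensor (n l : nat) (p : 'rV[R]_n) (s : 'rV[R]_l) : 'rV[R]_(n * l) :=
  mxvec (\matrix_(i < n, j < l) (p 0 i * s 0 j)).

End Majorization.

(* Let a be the optimal bound of the p_x (x) s and q that of the p_x, both sorted.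
   Summing a over consecutive blocks of length l gives a sorted distribution that
   majorizes every p_x (the k l largest entries of p_x (x) s add up to at least the
   k largest entries of p_x), hence majorizes q: every prefix sum of q is bounded by
   the prefix sum of a at the corresponding multiple of l.  The prefix sums of the
   sorted a are concave, so this bound extends to all prefix sums of
   w = q (x) (1/l, ..., 1/l).  Thus a majorizes w, and Schur concavity of the entropy
   (Gibbs' inequality against w, then Abel summation against the nonincreasing
   weights ln w_k) gives H(a) <= H(w) = ln l + H(q). *)

From HB Require Import structures.
From mathcomp Require Import all_boot all_order all_algebra.
From mathcomp Require Import reals exp lra ring.
Set Implicit Arguments. Unset Strict Implicit. Unset Printing Implicit Defensive.
Import Order.TTheory GRing.Theory Num.Theory.
Local Open Scope ring_scope.

Section LargestSums.
Variable R : realDomainType.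
Implicit Types (s : seq R) (c : R).

Local Notation geR := (fun a b : R => b <= a).

Lemma sum_take_nth s k : \sum_(x <- take k s) x = \sum_(0 <= i < k) s`_i.
Proof.
elim: s k => [|x s IH] k.
  by rewrite big_nil big1 // => i _; rewrite nth_nil.
case: k => [|k]; first by rewrite take0 big_nil big_geq.
by rewrite /= big_cons big_nat_recl // IH.
Qed.

Lemma sum_pos_part_sorted s k : sorted geR s -> (k < size s)%N ->
  \sum_(x <- s) Num.max (x - s`_k) 0 = \sum_(x <- take k s) (x - s`_k).
Proof.
move=> ss hk; rewrite -{1}(cat_take_drop k s) big_cat /=.
have le_nth i j : (i <= j < size s)%N -> s`_j <= s`_i.
  case/andP=> hij hj; apply: (sorted_leq_nth ge_trans lexx) => //.
  by rewrite inE (leq_ltn_trans hij).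
have -> : \sum_(x <- drop k s) Num.max (x - s`_k) 0 = 0.
  rewrite big_seq big1 // => x /nthP - /(_ 0) [i hi <-].
  rewrite size_drop in hi; rewrite nth_drop; apply/max_idPr; rewrite subr_le0.
  by apply: le_nth; rewrite leq_addr -ltn_subRL.
rewrite addr0 !big_seq; apply: eq_bigr => x /nthP - /(_ 0) [i hi <-].
rewrite size_take hk in hi; apply/max_idPl; rewrite subr_ge0 nth_take //.
by apply: le_nth; rewrite ltnW.
Qed.

Lemma sum_take_le_sort s k :
  \sum_(x <- take k s) x <= \sum_(x <- take k (sort geR s)) x.
Proof.
set y := sort geR s.
have py : perm_eq y s by rewrite perm_sort.
have szy : size y = size s by rewrite size_sort.
have [hk|hk] := leqP (size s) k.
  by rewrite !take_oversize ?szy // (perm_big _ py).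
(* With c the (k+1)-th largest entry, x <= c + max (x - c) 0, and all the positive
   parts max (x - c) 0 sit among the k largest entries. *)
pose c := y`_k.
have sumc r : \sum_(x <- r) c = c *+ size r.
  by elim: r => [|x r IH]; rewrite ?big_nil ?big_cons ?IH ?mulrS.
have : \sum_(x <- take k s) (x - c) <= \sum_(x <- take k y) (x - c).
  apply: le_trans (_ : _ <= \sum_(x <- s) Num.max (x - c) 0) _.
    rewrite -{2}(cat_take_drop k s) big_cat /= -[leLHS]addr0.
    apply: lerD; first by apply: ler_sum => x _; rewrite le_max lexx.
    by apply: sumr_ge0 => x _; rewrite le_max lexx orbT.
  rewrite -(perm_big _ py) sum_pos_part_sorted ?szy //.
  by apply: sort_sorted; exact: ge_total.
by rewrite !big_split /= !sumrN !sumc !size_take szy hk lerD2r.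
Qed.

Lemma take_allpairs_mul s t k :
  take (k * size t) [seq a * b | a <- s, b <- t] = [seq a * b | a <- take k s, b <- t].
Proof.
elim: s k => [|x s IH] [|k] /=; rewrite ?mul0n ?take0 //.
by rewrite mulSn take_cat size_map ltnNge leq_addr /= addKn IH.
Qed.

Lemma sum_allpairs_mul s t :
  \sum_(z <- [seq a * b | a <- s, b <- t]) z = (\sum_(a <- s) a) * \sum_(b <- t) b.
Proof.
elim: s => [|x s IH]; first by rewrite !big_nil mul0r.
by rewrite /= big_cat big_map IH big_cons mulrDl; congr (_ + _); rewrite mulr_sumr.
Qed.

End LargestSums.

Lemma sum_prefixD (V : nmodType) (f : nat -> V) m t :
  \sum_(0 <= k < m + t) f k = \sum_(0 <= k < m) f k + \sum_(0 <= i < t) f (m + i)%N.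
Proof.
rewrite (big_cat_nat (leq0n m) (leq_addr t m)) /= -{2}[m]add0n big_addn addKn.
by congr (_ + _); apply: eq_bigr => i _; rewrite addnC.
Qed.

Lemma sum_nat_blocks (V : nmodType) (f : nat -> V) l j :
  \sum_(0 <= k < j * l) f k = \sum_(0 <= i < j) \sum_(0 <= t < l) f (i * l + t)%N.
Proof.
elim: j => [|j IH]; first by rewrite mul0n !big_geq.
by rewrite mulSnr sum_prefixD IH big_nat_recr.
Qed.

Section PrefixSums.
Variable R : realDomainType.
Implicit Types (a b c w : nat -> R).

Lemma prefix_sum_mean b t l :
  (forall i j, (i <= j)%N -> b j <= b i) -> (t <= l)%N ->
  t%:R * \sum_(0 <= i < l) b i <= l%:R * \sum_(0 <= i < t) b i.
Proof.
move=> bdec htl; rewrite (big_cat_nat (leq0n t) htl) /=.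
set X := \sum_(0 <= i < t) b i; set Y := \sum_(t <= i < l) b i.
have hX : t%:R * b t <= X.
  have -> : t%:R * b t = \sum_(0 <= i < t) b t by rewrite sumr_const_nat subn0 mulr_natl.
  by apply: ler_sum_nat => i /andP[_ hi]; apply: bdec; exact: ltnW.
have hY : Y <= (l%:R - t%:R) * b t.
  rewrite -natrB // mulr_natl -sumr_const_nat.
  by apply: ler_sum_nat => i /andP[hi _]; apply: bdec.
rewrite -subr_ge0.
have -> : l%:R * X - t%:R * (X + Y) =
    (l%:R - t%:R) * (X - t%:R * b t) + t%:R * ((l%:R - t%:R) * b t - Y) by ring.
by rewrite addr_ge0 ?mulr_ge0 ?subr_ge0 ?ler_nat.
Qed.

Lemma abel_prefix_le a w c N :
  (forall i, (i < N)%N -> c i.+1 <= c i) ->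
  (forall K, (K <= N)%N -> \sum_(0 <= i < K) w i <= \sum_(0 <= i < K) a i) ->
  \sum_(0 <= i < N) a i = \sum_(0 <= i < N) w i ->
  \sum_(0 <= i < N) w i * c i <= \sum_(0 <= i < N) a i * c i.
Proof.
move=> cdec hpre htot.
pose D K := \sum_(0 <= i < K) a i - \sum_(0 <= i < K) w i.
suff abel K : (K <= N)%N -> D K * c K <= \sum_(0 <= i < K) (a i - w i) * c i.
  have := abel N (leqnn N).
  rewrite /D htot subrr mul0r.
  under eq_bigr do rewrite mulrBl.
  by rewrite sumrB subr_ge0.
elim: K => [|K IH] hK; first by rewrite /D !big_geq // subrr mul0r.
have DS : D K.+1 = D K + (a K - w K) by rewrite /D !big_nat_recr //=; ring.
apply: le_trans (_ : D K.+1 * c K <= _).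
  by apply: ler_wpM2l (cdec K hK); rewrite subr_ge0 hpre.
by rewrite big_nat_recr //= DS mulrDl lerD2r IH // ltnW.
Qed.

End PrefixSums.

Section Spreading.
Variables (R : realFieldType) (l : nat).
Hypothesis l_gt0 : (0 < l)%N.
Implicit Types (a q : nat -> R).

(* [spread q] lists q (x) (1/l, ..., 1/l) block by block. *)
Definition spread q k := q (k %/ l)%N / l%:R.

Lemma spread_block q j t : (t < l)%N -> spread q (j * l + t) = q j / l%:R.
Proof. by move=> ht; rewrite /spread divnMDl // divn_small // addn0. Qed.

Lemma spread_ge0 q : (forall i, 0 <= q i) -> forall k, 0 <= spread q k.
Proof. by move=> q0 k; rewrite divr_ge0. Qed.

Lemma spread_noninc q : (forall i j, (i <= j)%N -> q j <= q i) ->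
  forall i j, (i <= j)%N -> spread q j <= spread q i.
Proof.
by move=> qdec i j hij; rewrite ler_pM2r ?invr_gt0 ?ltr0n // qdec // leq_div2r.
Qed.

Lemma sum_spread q j t : (t <= l)%N ->
  \sum_(0 <= k < j * l + t) spread q k = \sum_(0 <= i < j) q i + t%:R * (q j / l%:R).
Proof.
have block i t' : (t' <= l)%N ->
    \sum_(0 <= s < t') spread q (i * l + s) = t'%:R * (q i / l%:R).
  move=> ht'; rewrite (eq_big_nat _ _ (F2 := fun=> q i / l%:R)).
    by rewrite sumr_const_nat subn0 mulr_natl.
  by move=> s /andP[_ hs]; rewrite spread_block // (leq_trans hs ht').
move=> ht; rewrite sum_prefixD sum_nat_blocks block //; congr (_ + _).
by apply: eq_bigr => i _; rewrite block // mulrC divfK // pnatr_eq0 -lt0n.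
Qed.

Lemma prefix_spread_le a q :
  (forall i j, (i <= j)%N -> a j <= a i) ->
  (forall j, \sum_(0 <= i < j) q i <= \sum_(0 <= k < j * l) a k) ->
  forall K, \sum_(0 <= k < K) spread q k <= \sum_(0 <= k < K) a k.
Proof.
(* On each block [j l, (j + 1) l] the concave prefix sums of a lie above their chord,
   and the prefix sums of spread q follow the chord of the bounds for q. *)
move=> adec hq K; have ht : (K %% l <= l)%N by rewrite ltnW ?ltn_pmod.
rewrite (divn_eq K l) sum_spread //.
set j := (K %/ l)%N; set t := (K %% l)%N in ht *.
pose b i := a (j * l + i)%N.
have bdec i i' : (i <= i')%N -> b i' <= b i by move=> h; apply: adec; rewrite leq_add2l.
have := prefix_sum_mean bdec ht; have := hq j; have := hq j.+1.
rewrite mulSnr !sum_prefixD big_nat_recr //= -/b.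
set A := \sum_(0 <= k < j * l) a k; set Q := \sum_(0 <= i < j) q i.
set Bl := \sum_(0 <= i < l) b i; set Bt := \sum_(0 <= i < t) b i.
have lgt0 : 0 < l%:R :> R by rewrite ltr0n.
set z := q j / l%:R => hj1 hj hmean.
have qjz : q j = l%:R * z by rewrite mulrC divfK ?gt_eqF.
rewrite qjz in hj1.
suff : 0 <= l%:R * (A + Bt - (Q + t%:R * z)) by rewrite pmulr_rge0 // subr_ge0.
have -> : l%:R * (A + Bt - (Q + t%:R * z)) = (l%:R - t%:R) * (A - Q)
    + t%:R * (A + Bl - (Q + l%:R * z)) + (l%:R * Bt - t%:R * Bl) by ring.
by rewrite addr_ge0 ?subr_ge0 // addr_ge0 ?mulr_ge0 // subr_ge0 // ler_nat.
Qed.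

End Spreading.

Section EntropyConcavity.
Variable R : realType.
Implicit Types (a w q : nat -> R).

Definition nat_entropy a N := - \sum_(0 <= i < N) a i * ln (a i).

Lemma gibbs_ineq (x y : R) : 0 <= x -> 0 < y -> x - y <= x * (ln x - ln y).
Proof.
move=> x0 y0; have [->|xn0] := eqVneq x 0.
  by rewrite mul0r sub0r oppr_le0 ltW.
have {x0 xn0}xpos : 0 < x by rewrite lt_neqAle eq_sym xn0.
have yx : -1 < y / x - 1 by have := divr_gt0 y0 xpos; lra.
have := le_ln1Dx yx; rewrite [1 + _]addrC subrK ln_div ?posrE //.
move=> /(ler_wpM2l (ltW xpos)).
rewrite !mulrBr mulr1 [x * (y / x)]mulrCA divff ?gt_eqF // mulr1; lra.
Qed.

Lemma nat_entropy_le_of_prefix_le a w N :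
  (forall i, 0 <= a i) -> (forall i, 0 <= w i) ->
  (forall i j, (i <= j)%N -> w j <= w i) ->
  (forall K, (K <= N)%N -> \sum_(0 <= i < K) w i <= \sum_(0 <= i < K) a i) ->
  \sum_(0 <= i < N) a i = \sum_(0 <= i < N) w i ->
  nat_entropy a N <= nat_entropy w N.
Proof.
move=> a0 w0 wdec hpre htot.
have supp i : (i < N)%N -> w i = 0 -> a i = 0.
  move=> hi wi0.
  have tail0 : \sum_(i <= j < N) w j = 0.
    rewrite big_nat_cond big1 // => j /andP[/andP[hij _] _].
    by apply/le_anti; rewrite w0 andbT -wi0; exact: wdec.
  have WiN : \sum_(0 <= j < i) w j = \sum_(0 <= j < N) w j.
    by rewrite (big_cat_nat (leq0n i) (ltnW hi)) /= tail0 addr0.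
  have AiN : \sum_(0 <= j < i.+1) a j <= \sum_(0 <= j < N) a j.
    by rewrite (big_cat_nat (leq0n i.+1) hi) /= lerDl; apply: sumr_ge0.
  have := hpre i (ltnW hi); rewrite big_nat_recr //= in AiN.
  rewrite WiN -htot => hAi; apply/le_anti; rewrite a0 andbT; lra.
(* -B lies below every ln (w j), which keeps c nonincreasing across the zeros of w;
   a vanishes there too, so the value of c on them does not matter. *)
pose B := \sum_(0 <= j < N) `|ln (w j)|.
pose c i := if 0 < w i then ln (w i) else - B.
have cdec i : (i < N)%N -> c i.+1 <= c i.
  move=> hi; rewrite /c; case: ifP => [wi1|_].
    have wi : 0 < w i := lt_le_trans wi1 (wdec _ _ (leqnSn i)).
    by rewrite wi ler_ln ?posrE // wdec.
  case: ifP => // _; apply: lerNnormlW.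
  rewrite /B (bigD1_seq i) ?mem_index_iota ?iota_uniq //= lerDl.
  by apply: sumr_ge0.
have term i : (i < N)%N ->
    (a i - w i) * c i + (a i - w i) <= a i * ln (a i) - w i * ln (w i).
  move=> hi; rewrite /c; case: ifP => [wi|/negbT]; last first.
    rewrite -leNgt => wi_le0; have wi0 : w i = 0 by apply/le_anti; rewrite wi_le0 w0.
    by rewrite wi0 supp // !(subrr, mul0r, addr0).
  by have := gibbs_ineq (a0 i) wi; rewrite !mulrBl !mulrBr; lra.
have hsum : \sum_(0 <= i < N) ((a i - w i) * c i + (a i - w i))
    <= \sum_(0 <= i < N) (a i * ln (a i) - w i * ln (w i)).
  by apply: ler_sum_nat => i /andP[_ hi]; exact: term.
have habel := abel_prefix_le cdec hpre htot.
have hdiff : \sum_(0 <= i < N) (a i - w i) * c i =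
    \sum_(0 <= i < N) a i * c i - \sum_(0 <= i < N) w i * c i.
  by rewrite -sumrB; apply: eq_bigr => i _; rewrite mulrBl.
rewrite big_split /= hdiff !sumrB htot subrr addr0 in hsum.
rewrite /nat_entropy; lra.
Qed.

Lemma nat_entropy_spread q n l : (0 < l)%N -> (forall i, 0 <= q i) ->
  nat_entropy (spread l q) (n * l) = ln l%:R * \sum_(0 <= i < n) q i + nat_entropy q n.
Proof.
move=> l0 q0.
have block i : \sum_(0 <= t < l) spread l q (i * l + t) * ln (spread l q (i * l + t)) =
    q i * ln (q i) - ln l%:R * q i.
  rewrite (eq_big_nat _ _ (F2 := fun=> q i / l%:R * ln (q i / l%:R))); last first.
    by move=> t /andP[_ ht]; rewrite spread_block.
  rewrite sumr_const_nat subn0 -mulrnAl -mulr_natr divfK ?pnatr_eq0 -?lt0n //.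
  have [->|qn0] := eqVneq (q i) 0; first by rewrite !mul0r mulr0 subrr.
  have qi : 0 < q i by rewrite lt_neqAle eq_sym qn0 q0.
  by rewrite ln_div ?posrE ?ltr0n // mulrBr [ln l%:R * _]mulrC.
rewrite /nat_entropy sum_nat_blocks (eq_bigr _ (fun i _ => block i)) sumrB mulr_sumr.
lra.
Qed.

End EntropyConcavity.

Section RowVectors.
Variable R : realType.
Local Notation geR := (fun a b : R => b <= a).

Definition entries N (v : 'rV[R]_N) : seq R := [seq v 0 i | i : 'I_N].

Definition entry N (v : 'rV[R]_N) (i : nat) : R := (entries v)`_i.

Lemma size_entries N (v : 'rV[R]_N) : size (entries v) = N.
Proof. by rewrite size_map size_enum_ord. Qed.

Lemma entryE N (v : 'rV[R]_N) (i : 'I_N) : entry v i = v 0 i.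
Proof. by rewrite /entry (nth_map i) ?nth_ord_enum // size_enum_ord. Qed.

Lemma entry_out N (v : 'rV[R]_N) i : (N <= i)%N -> entry v i = 0.
Proof. by move=> hi; rewrite /entry nth_default // size_entries. Qed.

Lemma entry_ge0 N (v : 'rV[R]_N) : (forall j, 0 <= v 0 j) -> forall i, 0 <= entry v i.
Proof.
move=> v0 i; have [hi|hi] := ltnP i N; last by rewrite entry_out.
by rewrite -[i]/(nat_of_ord (Ordinal hi)) entryE.
Qed.

Lemma sum_entry N (v : 'rV[R]_N) : \sum_(i < N) v 0 i = \sum_(0 <= i < N) entry v i.
Proof. by rewrite big_mkord; apply: eq_bigr => i _; rewrite entryE. Qed.

Lemma sorted_entries N (v : 'rV[R]_N) :
  (forall i j : 'I_N, (i <= j)%N -> v 0 j <= v 0 i) -> sorted geR (entries v).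
Proof.
move=> vdec; rewrite sorted_map.
have : sorted (relpre val leq) (enum 'I_N) by rewrite -sorted_map val_enum_ord iota_sorted.
by apply: sub_sorted => i j /= hij; exact: vdec.
Qed.

Lemma entry_noninc N (v : 'rV[R]_N) : Prob_dec v ->
  forall i j, (i <= j)%N -> entry v j <= entry v i.
Proof.
move=> [[v0 _] vdec] i j hij; have [hj|hj] := ltnP j N; last first.
  by rewrite entry_out ?entry_ge0.
apply: (sorted_leq_nth ge_trans lexx) => //; first exact: sorted_entries.
by rewrite inE size_entries (leq_ltn_trans hij).
by rewrite inE size_entries.
Qed.

Lemma sum_largest_prefix N (v : 'rV[R]_N) k :
  (forall i j : 'I_N, (i <= j)%N -> v 0 j <= v 0 i) ->
  sum_largest v k = \sum_(0 <= i < k) entry v i.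
Proof.
by move=> vdec; rewrite /sum_largest sorted_sort ?sum_take_nth ?sorted_entries //; exact: ge_trans.
Qed.

Lemma sum_entries N (v : 'rV[R]_N) : \sum_(x <- entries v) x = \sum_(i < N) v 0 i.
Proof. by rewrite -[entries v]take_size sum_take_nth size_entries sum_entry. Qed.

Lemma perm_entries_tensor n l (p : 'rV[R]_n) (s : 'rV[R]_l) :
  perm_eq (entries (tensor p s)) [seq a * b | a <- entries p, b <- entries s].
Proof.
have hperm : perm_eq (enum 'I_(n * l))
    [seq mxvec_index i j | i <- enum 'I_n, j <- enum 'I_l].
  apply: uniq_perm; first exact: enum_uniq.
    apply: allpairs_uniq; try exact: enum_uniq.
    by move=> [i j] [i' j'] _ _ /= /cast_ord_inj /enum_rank_inj.
  move=> k; rewrite mem_enum; case/mxvec_indexP: k => i j.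
  by apply/esym/allpairsP; exists (i, j); rewrite !mem_enum.
apply: perm_trans (perm_map _ hperm) _.
rewrite /entries map_allpairs [X in perm_eq _ X]allpairs_mapl [X in perm_eq _ X]allpairs_mapr.
suff -> : [seq tensor p s 0 (mxvec_index i j) | i <- enum 'I_n, j <- enum 'I_l] =
    [seq p 0 i * s 0 j | i <- enum 'I_n, j <- enum 'I_l] by [].
by apply: eq_allpairs => i j; rewrite /tensor mxvecE mxE.
Qed.

Lemma sum_largest_tensor n l (p : 'rV[R]_n) (s : 'rV[R]_l) k :
  \sum_(j < l) s 0 j = 1 -> sum_largest p k <= sum_largest (tensor p s) (k * l).
Proof.
move=> s1; set sp := sort geR (entries p).
have hperm : perm_eq (entries (tensor p s)) [seq a * b | a <- sp, b <- entries s].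
  apply: perm_trans (perm_entries_tensor p s) _.
  by apply: perm_allpairs => //; rewrite perm_sym perm_sort.
rewrite /sum_largest (@perm_sortP _ geR ge_total ge_trans ge_anti _ _ hperm).
apply: le_trans (sum_take_le_sort _ _).
have -> : (k * l)%N = (k * size (entries s))%N by rewrite size_entries.
rewrite take_allpairs_mul sum_allpairs_mul.
by rewrite sum_entries s1 mulr1.
Qed.

Lemma entropyE N (v : 'rV[R]_N) : entropy v = nat_entropy (entry v) N.
Proof.
by rewrite /entropy /nat_entropy big_mkord; congr (- _); apply: eq_bigr => i _; rewrite entryE.
Qed.

Lemma Prob_size_gt0 N (v : 'rV[R]_N) : Prob v -> (0 < N)%N.
Proof.
case: N v => [|N] v [_ v1] //.
by move: v1; rewrite big_ord0 => /eqP; rewrite eq_sym oner_eq0.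
Qed.

Definition block_sums n l (a : 'rV[R]_(n * l)) : 'rV[R]_n :=
  \row_(i < n) \sum_(0 <= t < l) entry a (i * l + t).

Lemma entry_block_sums n l (a : 'rV[R]_(n * l)) i :
  entry (block_sums a) i = \sum_(0 <= t < l) entry a (i * l + t).
Proof.
have [hi|hi] := ltnP i n; first by rewrite -[i]/(nat_of_ord (Ordinal hi)) entryE mxE.
rewrite entry_out // big1 // => t _; rewrite entry_out //.
exact: leq_trans (leq_mul hi (leqnn l)) (leq_addr _ _).
Qed.

Lemma prefix_block_sums n l (a : 'rV[R]_(n * l)) j :
  \sum_(0 <= i < j) entry (block_sums a) i = \sum_(0 <= k < j * l) entry a k.
Proof. by rewrite sum_nat_blocks; apply: eq_bigr => i _; exact: entry_block_sums. Qed.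

Lemma block_sums_dec n l (a : 'rV[R]_(n * l)) : Prob_dec a -> Prob_dec (block_sums a).
Proof.
move=> aD; have [[a0 a1] _] := aD; split; [split|].
- by move=> i; rewrite mxE; apply: sumr_ge0 => t _; exact: entry_ge0.
- by rewrite sum_entry prefix_block_sums -sum_entry.
- move=> i j hij; rewrite !mxE; apply: ler_sum_nat => t _; apply: entry_noninc => //.
  by rewrite leq_add2r leq_mul2r hij orbT.
Qed.

Lemma block_sums_majorizes n l (a : 'rV[R]_(n * l)) (p : 'rV[R]_n) (s : 'rV[R]_l) :
  Prob_dec a -> \sum_(j < l) s 0 j = 1 -> majorizes a (tensor p s) ->
  majorizes (block_sums a) p.
Proof.
move=> aD s1 amaj k; apply: le_trans (sum_largest_tensor p k s1) _.
apply: le_trans (amaj (k * l)%N) _.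
have [_ rdec] := block_sums_dec aD; have [_ adec] := aD.
by rewrite !sum_largest_prefix // prefix_block_sums.
Qed.

Lemma opt_upper_bound_tensor_prefix m n l (p : 'I_m -> 'rV[R]_n) (s : 'rV[R]_l)
    (a : 'rV[R]_(n * l)) (q : 'rV[R]_n) :
  \sum_(j < l) s 0 j = 1 ->
  is_opt_upper_bound (fun x => tensor (p x) s) a -> is_opt_upper_bound p q ->
  forall j, \sum_(0 <= i < j) entry q i <= \sum_(0 <= k < j * l) entry a k.
Proof.
move=> s1 [aD amaj _] [[_ qdec] _ qopt] j.
have [rP rdec] := block_sums_dec aD.
have := qopt _ rP (fun x => block_sums_majorizes aD s1 (amaj x)) j.
by rewrite !sum_largest_prefix // prefix_block_sums.
Qed.

Lemma entropy_le_of_block_prefix n l (a : 'rV[R]_(n * l)) (q : 'rV[R]_n) :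
  (0 < l)%N -> Prob_dec a -> Prob_dec q ->
  (forall j, \sum_(0 <= i < j) entry q i <= \sum_(0 <= k < j * l) entry a k) ->
  entropy a <= ln l%:R + entropy q.
Proof.
move=> l0 aD qD hblock; have [[a0 a1] _] := aD; have [[q0 q1] _] := qD.
have q1' : \sum_(0 <= i < n) entry q i = 1 by rewrite -sum_entry.
have -> : ln l%:R + entropy q = nat_entropy (spread l (entry q)) (n * l).
  by rewrite (nat_entropy_spread n l0 (entry_ge0 q0)) q1' mulr1 entropyE.
rewrite entropyE; apply: nat_entropy_le_of_prefix_le.
- exact: entry_ge0.
- exact/spread_ge0/entry_ge0.
- exact/spread_noninc/entry_noninc.
- by move=> K _; apply: prefix_spread_le => //; exact: entry_noninc.
- by rewrite -sum_entry a1 -[(n * l)%N]addn0 sum_spread // q1' mul0r addr0.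
Qed.

End RowVectors.

Theorem mainTheorem18 (R : realType) (l m n : nat)
    (p : 'I_m -> 'rV[R]_n) (s : 'rV[R]_l)
    (hp : forall x, Prob (p x)) (hs : Prob s)
    (qps : 'rV[R]_(n * l)) (qp : 'rV[R]_n)
    (hqps : is_opt_upper_bound (fun x => tensor (p x) s) qps)
    (hqp : is_opt_upper_bound p qp) :
  entropy qps <= ln (l%:R) + entropy qp.
Proof.
have s1 : \sum_(j < l) s 0 j = 1 by case: hs.
apply: entropy_le_of_block_prefix (Prob_size_gt0 hs) _ _
  (opt_upper_bound_tensor_prefix s1 hqps hqp).
- by case: hqps.
- by case: hqp.
Qed.
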